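(* Let $\mathcal{A}$ be a toric line arrangement in $\mathbb{T}^2$ consisting of exactly $3$ lines, with $f_0$ vertices and $f_2$ chambers, and suppose $f_0<f_2<2f_0$. Then $f_2-f_0$ divides $f_0$.
   Context: Let $\mathbb{T}^2=\mathbb{R}^2/\mathbb{Z}^2$ with quotient map $\pi:\mathbb{R}^2\to\mathbb{T}^2$. A toric line is the image $\pi(L)$ of a line $L=\{(x,y)\in\mathbb{R}^2: ax+by=c\}$ with $a,b\in\mathbb{Z}$ coprime and $c\in\mathbb{R}$; it is said to be of type $(a,b)$. A toric line arrangement is a finite set $\mathcal{A}=\{l_1,\dots,l_n\}$ of distinct toric lines which is essential, i.e. not all of its lines are of the same type (not all lines are parallel). The vertices of $\mathcal{A}$ are the points of $\mathbb{T}^2$ lying on at least two lines of $\mathcal{A}$; the chambers are the connected components of $\mathbb{T}^2\setminus\bigcup_i l_i$. We write $f_0$ and $f_2$ for the numbers of vertices and chambers. *)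

(* real plane R^2, torus T^2 = R^2/Z^2 handled via lifts. *)
From Stdlib Require Export Reals ZArith List.
Open Scope R_scope.

(* A toric line of type (ta,tb): image of {ta x + tb y = tc} in T^2. *)
Record tline := mkTline { ta : Z; tb : Z; tc : R }.

Definition valid_line (l : tline) : Prop := Z.gcd (ta l) (tb l) = 1%Z.

(* p in R^2 lies in pi^{-1}(pi(L)) = L + Z^2 (uses gcd(a,b)=1). *)
Definition on_line (l : tline) (p : R * R) : Prop :=
  exists k : Z, IZR (ta l) * fst p + IZR (tb l) * snd p = tc l + IZR k.

Definition same_tline (l1 l2 : tline) : Prop :=
  forall p, on_line l1 p <-> on_line l2 p.

Definition parallel (l1 l2 : tline) : Prop :=
  (ta l1 = ta l2 /\ tb l1 = tb l2) \/ (ta l1 = (- ta l2)%Z /\ tb l1 = (- tb l2)%Z).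

Definition torus_eq (p q : R * R) : Prop :=
  exists m n : Z, fst p - fst q = IZR m /\ snd p - snd q = IZR n.

Definition toric_arrangement (A : list tline) : Prop :=
  Forall valid_line A /\
  (forall i j, (i < length A)%nat -> (j < length A)%nat -> i <> j ->
     ~ same_tline (nth i A (mkTline 0 0 0)) (nth j A (mkTline 0 0 0))) /\
  (exists l1 l2, In l1 A /\ In l2 A /\ ~ parallel l1 l2).

Definition on_union (A : list tline) (p : R * R) : Prop :=
  exists l, In l A /\ on_line l p.

Definition is_vertex (A : list tline) (p : R * R) : Prop :=
  exists l1 l2, In l1 A /\ In l2 A /\ ~ same_tline l1 l2 /\ on_line l1 p /\ on_line l2 p.

(* p, q (lifts of points of the complement) lie in the same (path) component
   of T^2 minus the lines: a path in R^2 avoiding the preimage of the lines,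
   from p to some lift of q. *)
Definition same_chamber (A : list tline) (p q : R * R) : Prop :=
  ~ on_union A p /\ ~ on_union A q /\
  exists g1 g2 : R -> R,
    continuity g1 /\ continuity g2 /\
    g1 0 = fst p /\ g2 0 = snd p /\ torus_eq (g1 1, g2 1) q /\
    (forall t, 0 <= t <= 1 -> ~ on_union A (g1 t, g2 t)).

Definition num_classes (P : R * R -> Prop) (E : R * R -> R * R -> Prop) (n : nat) : Prop :=
  exists pts : list (R * R),
    length pts = n /\
    (forall x, In x pts -> P x) /\
    (forall i j, (i < n)%nat -> (j < n)%nat -> i <> j ->
       ~ E (nth i pts (0, 0)) (nth j pts (0, 0))) /\
    (forall p, P p -> exists x, In x pts /\ E p x).

Definition num_vertices (A : list tline) (f0 : nat) : Prop :=
  num_classes (is_vertex A) torus_eq f0.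

Definition num_chambers (A : list tline) (f2 : nat) : Prop :=
  num_classes (fun p => ~ on_union A p) (same_chamber A) f2.

From Stdlib Require Import Reals ZArith List Lra Lia.
From Stdlib Require Import Classical ClassicalEpsilon RelationClasses FinFun.
Open Scope R_scope.

(* Write line [i] as [phi_i(p) in Z] with [phi_i(x, y) = a_i x + b_i y - c_i], the first
   two lines not parallel. In the coordinates [(phi1, phi2)] the torus is the plane
   modulo the lattice [{(a1 m + b1 n, a2 m + b2 n)}], and [phi3 = alpha phi1 + beta phi2
   + gamma]; negating the equation of the second line we may assume [alpha beta <= 0].
   Tile the plane by the unit squares of the [(phi1, phi2)]-grid and let [z] be the
   value of [phi3] at the lower left corner of a square. The square then contains
   [1 + #(Z between z and z + alpha) + #(Z between z and z + beta)] vertices, and one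
   more chamber than vertices exactly when [z] is an integer, i.e. when its corner is
   a triple point. Both numbers only depend on [z mod 1]. Summing over a set of
   representatives of the squares modulo the lattice of the form [r + e], where [r]
   runs over the classes of [z mod 1] and [e] over the squares with [z mod 1] equal
   to that of the origin, [f0] is a multiple of the number [t] of [e]'s and
   [f2 - f0] is [t] times the number (at most one) of classes with [z] integral.
   Hence [f0 < f2] forces [f2 - f0 = t]. *)

(** * Counting equivalence classes *)

Definition apart {X} (E : X -> X -> Prop) (x y : X) : Prop := ~ E x y /\ ~ E y x.

Definition pairwise_inequiv {X} (E : X -> X -> Prop) : list X -> Prop :=
  ForallOrdPairs (apart E).

Section PairwiseInequiv.
Context {X : Type} (E : X -> X -> Prop).

Lemma pairwise_inequiv_nth l d :
  pairwise_inequiv E l <->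
  forall i j, (i < length l)%nat -> (j < length l)%nat -> i <> j ->
    ~ E (nth i l d) (nth j l d).
Proof.
  split.
  - induction 1 as [|x l Hx _ IH]; simpl; [intros; lia|].
    rewrite Forall_forall in Hx. intros [|i] [|j] Hi Hj Hij; try lia.
    + apply Hx, nth_In. lia.
    + apply Hx, nth_In. lia.
    + apply IH; lia.
  - induction l as [|x l IH]; simpl; intros H; constructor.
    + apply Forall_forall. intros y Hy. destruct (In_nth l y d Hy) as [k [Hk <-]].
      split; [apply (H 0%nat (S k)) | apply (H (S k) 0%nat)]; lia.
    + apply IH. intros i j Hi Hj Hij. apply (H (S i) (S j)); lia.
Qed.

Lemma pairwise_inequiv_app l1 l2 :
  pairwise_inequiv E l1 -> pairwise_inequiv E l2 ->
  (forall x y, In x l1 -> In y l2 -> apart E x y) -> pairwise_inequiv E (l1 ++ l2).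
Proof.
  induction 1 as [|x l1 Hx _ IH]; simpl; intros Hl2 Hcross; auto.
  constructor.
  - apply Forall_app. split; auto. apply Forall_forall. auto.
  - apply IH; auto.
Qed.

Lemma pairwise_inequiv_length_le (P : X -> Prop)
  (E_trans : forall x1 x2 y, P x1 -> P x2 -> E x1 y -> E x2 y -> E x1 x2) l1 l2 :
  pairwise_inequiv E l1 ->
  (forall x, In x l1 -> P x /\ exists y, In y l2 /\ E x y) ->
  (length l1 <= length l2)%nat.
Proof.
  revert l2. induction l1 as [|x l1 IH]; intros l2 Hl1 Hcov; simpl; [lia|].
  inversion Hl1 as [|? ? Hx Hl1']; subst. rewrite Forall_forall in Hx.
  destruct (Hcov x (or_introl eq_refl)) as [HPx [y [Hy Exy]]].
  destruct (in_split y l2 Hy) as [A [B ->]].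
  enough (length l1 <= length (A ++ B))%nat by (rewrite !length_app in *; simpl; lia).
  apply IH; auto. intros z Hz.
  destruct (Hcov z (or_intror Hz)) as [HPz [y' [Hy' Ezy']]]. split; auto.
  exists y'. split; auto. apply in_app_or in Hy'. destruct Hy' as [Hy'|[<-|Hy']].
  - apply in_or_app; auto.
  - exfalso. apply (proj1 (Hx z Hz)), (E_trans x z y); auto.
  - apply in_or_app; simpl; auto.
Qed.

End PairwiseInequiv.

Lemma pairwise_inequiv_map {X Y} (E : X -> X -> Prop) (E' : Y -> Y -> Prop) (f : X -> Y) l :
  (forall x y, In x l -> In y l -> E' (f x) (f y) -> E x y) ->
  pairwise_inequiv E l -> pairwise_inequiv E' (map f l).
Proof.
  intros Hf Hl. induction Hl as [|x l Hx _ IH]; simpl; constructor.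
  - rewrite Forall_forall in *. intros y' Hy'. apply in_map_iff in Hy'.
    destruct Hy' as [y [<- Hy]]. destruct (Hx y Hy) as [H1 H2].
    split; intros HE; [apply H1 | apply H2]; apply Hf; simpl; auto.
  - apply IH. intros y z Hy Hz. apply Hf; simpl; auto.
Qed.

Lemma NoDup_pairwise_inequiv_eq {X} (l : list X) : NoDup l -> pairwise_inequiv eq l.
Proof.
  induction 1 as [|x l Hx _ IH]; constructor; auto.
  apply Forall_forall. intros y Hy. split; intros ->; auto.
Qed.

Lemma pairwise_inequiv_flat_map {X Y} (R : X -> X -> Prop) (E : Y -> Y -> Prop)
  (F : X -> list Y) l :
  pairwise_inequiv R l -> (forall q, In q l -> pairwise_inequiv E (F q)) ->
  (forall q q' x y, In q l -> In q' l -> In x (F q) -> In y (F q') -> E x y -> R q q') ->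
  pairwise_inequiv E (flat_map F l).
Proof.
  induction 1 as [|q l Hq _ IH]; simpl; intros HF Hcross; [constructor|].
  rewrite Forall_forall in Hq. apply pairwise_inequiv_app; auto.
  - apply IH; auto. intros. eapply Hcross; eauto.
  - intros x y Hx Hy. apply in_flat_map in Hy. destruct Hy as [q' [Hq' Hy]].
    destruct (Hq q' Hq') as [H1 H2].
    split; intros HE; [apply H1 | apply H2]; eapply Hcross; eauto.
Qed.

Lemma exists_transversal {X} (E : X -> X -> Prop) `{Equivalence X E} (P : X -> Prop) l :
  exists t, (forall x, In x t -> In x l /\ P x) /\ pairwise_inequiv E t /\
            (forall x, In x l -> P x -> exists y, In y t /\ E x y).
Proof.
  induction l as [|b l IH].
  { exists nil. split; [|split]; [simpl; tauto | constructor | simpl; tauto]. }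
  destruct IH as [t [Ht [Hpw Hcov]]].
  destruct (classic (P b /\ ~ exists y, In y t /\ E b y)) as [[Hb Hnew]|Hold].
  - exists (b :: t). split; [|split].
    + intros x [<-|Hx]; simpl; [auto|]. destruct (Ht x Hx); auto.
    + constructor; auto. apply Forall_forall. intros y Hy.
      split; intros HE; apply Hnew; exists y; split; auto. symmetry. auto.
    + intros x [<-|Hx] HP; [exists b; split; simpl; auto; reflexivity|].
      destruct (Hcov x Hx HP) as [y [Hy Exy]]. exists y. simpl. auto.
  - exists t. split; [|split]; auto.
    + intros x Hx. destruct (Ht x Hx). simpl. auto.
    + intros x [<-|Hx] HP; auto. apply NNPP. intros Hn. apply Hold. split; auto.
Qed.

Lemma list_sum_map_add {X} (g h : X -> nat) l :
  list_sum (map (fun x => g x + h x)%nat l) = (list_sum (map g l) + list_sum (map h l))%nat.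
Proof. induction l as [|x l IH]; simpl; auto. rewrite IH. lia. Qed.

Lemma list_sum_map_const {X} (g : X -> nat) c l :
  (forall x, In x l -> g x = c) -> list_sum (map g l) = (length l * c)%nat.
Proof.
  induction l as [|x l IH]; intros Hg; simpl; auto.
  rewrite Hg, IH; [lia | intros y Hy; apply Hg | ]; simpl; auto.
Qed.

Lemma list_sum_flat_map_translates {X} (g : X -> nat) (add : X -> X -> X) rs es :
  (forall r e, In e es -> g (add r e) = g r) ->
  list_sum (map g (flat_map (fun r => map (add r) es) rs)) =
  (length es * list_sum (map g rs))%nat.
Proof.
  intros Hg. induction rs as [|r rs IH]; simpl; [lia|].
  rewrite map_app, list_sum_app, IH, map_map.
  rewrite (list_sum_map_const _ (g r)) by auto. lia.
Qed.

Lemma list_sum_indicator_le_1 {X} (E : X -> X -> Prop) (t : X -> nat) l :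
  pairwise_inequiv E l -> (forall x, (t x <= 1)%nat) ->
  (forall x y, t x = 1%nat -> t y = 1%nat -> E x y) -> (list_sum (map t l) <= 1)%nat.
Proof.
  intros Hl Ht Hxy. induction Hl as [|x l Hx _ IH]; simpl; [lia|].
  destruct (Nat.eq_dec (t x) 1) as [E1|E1]; [|specialize (Ht x); lia].
  enough (list_sum (map t l) = 0%nat) by lia.
  rewrite Forall_forall in Hx. clear IH. induction l as [|y l IHl]; simpl; auto.
  destruct (Nat.eq_dec (t y) 1) as [E2|E2].
  - exfalso. apply (proj1 (Hx y (or_introl eq_refl))). auto.
  - rewrite IHl by (intros z Hz; apply Hx; simpl; auto). specialize (Ht y). lia.
Qed.

Section NumClasses.
Variables (P : R * R -> Prop) (E : R * R -> R * R -> Prop).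

Lemma num_classes_of_list l :
  (forall x, In x l -> P x) -> pairwise_inequiv E l ->
  (forall p, P p -> exists x, In x l /\ E p x) -> num_classes P E (length l).
Proof.
  intros HP Hl Hcov. exists l. repeat split; auto.
  apply (proj1 (pairwise_inequiv_nth E l (0, 0))). auto.
Qed.

Lemma num_classes_unique n m
  (E_trans : forall x1 x2 y, P x1 -> P x2 -> E x1 y -> E x2 y -> E x1 x2) :
  num_classes P E n -> num_classes P E m -> n = m.
Proof.
  intros [l1 [<- [HP1 [Hd1 Hc1]]]] [l2 [<- [HP2 [Hd2 Hc2]]]].
  apply (pairwise_inequiv_nth E _ (0, 0)) in Hd1, Hd2.
  apply Nat.le_antisymm; apply (pairwise_inequiv_length_le E P E_trans); auto;
    intros x Hx; split; auto.
Qed.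

End NumClasses.

Lemma num_classes_ext (P P' : R * R -> Prop) (E E' : R * R -> R * R -> Prop) n :
  (forall p, P p <-> P' p) -> (forall p q, E p q <-> E' p q) ->
  num_classes P E n -> num_classes P' E' n.
Proof.
  intros HP HE [l [Hn [Hl [Hd Hc]]]]. exists l. repeat split; auto.
  - intros x Hx. apply HP. auto.
  - intros i j Hi Hj Hij HE'. apply (Hd i j Hi Hj Hij), HE. auto.
  - intros p Hp. destruct (Hc p (proj2 (HP p) Hp)) as [x [Hx Hpx]].
    exists x. split; auto. apply HE. auto.
Qed.

(** * Integer parts and integers in intervals *)

Definition is_int (x : R) : Prop := exists k : Z, x = IZR k.

Lemma is_int_add_IZR x k : is_int x -> is_int (x + IZR k).
Proof. intros [j ->]. exists (j + k)%Z. rewrite plus_IZR. auto. Qed.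

Lemma not_is_int x k : IZR k < x < IZR k + 1 -> ~ is_int x.
Proof.
  intros [H1 H2] [n ->]. apply lt_IZR in H1. rewrite <- plus_IZR in H2.
  apply lt_IZR in H2. lia.
Qed.

Lemma Int_part_bounds x : IZR (Int_part x) <= x < IZR (Int_part x) + 1.
Proof. destruct (base_Int_part x). lra. Qed.

Lemma Int_part_eq x k : IZR k <= x < IZR k + 1 -> Int_part x = k.
Proof. intros H. symmetry. apply Int_part_spec. lra. Qed.

Lemma Int_part_IZR k : Int_part (IZR k) = k.
Proof. apply Int_part_eq. lra. Qed.

Lemma Int_part_add_IZR x k : Int_part (x + IZR k) = (Int_part x + k)%Z.
Proof. apply Int_part_eq. rewrite plus_IZR. destruct (Int_part_bounds x). lra. Qed.

Lemma Int_part_le x y : x <= y -> (Int_part x <= Int_part y)%Z.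
Proof.
  intros H. destruct (Int_part_bounds x), (Int_part_bounds y).
  assert (IZR (Int_part x) < IZR (Int_part y + 1)) by (rewrite plus_IZR; lra).
  apply lt_IZR in H4. lia.
Qed.

Lemma Int_part_lt x : ~ is_int x -> IZR (Int_part x) < x < IZR (Int_part x) + 1.
Proof.
  intros Hx. destruct (Int_part_bounds x) as [[H1|H1] H2]; split; auto.
  exfalso. apply Hx. exists (Int_part x). auto.
Qed.

Lemma IZR_Int_part x : is_int x -> IZR (Int_part x) = x.
Proof. intros [k ->]. rewrite Int_part_IZR. auto. Qed.

Lemma is_int_iff_Int_part x : is_int x <-> x - IZR (Int_part x) = 0.
Proof.
  split; [intros H; rewrite IZR_Int_part by auto; ring|].
  intros H. exists (Int_part x). lra.
Qed.

Lemma Int_part_path (h : R -> R) : continuity h ->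
  (forall t, 0 <= t <= 1 -> ~ is_int (h t)) -> Int_part (h 0) = Int_part (h 1).
Proof.
  intros Hc Hn. symmetry. apply Int_part_eq. set (k := Int_part (h 0)).
  destruct (Int_part_lt (h 0)) as [H0 H1]; [apply Hn; lra|]. fold k in H0, H1.
  split.
  - destruct (Rle_lt_dec (IZR k) (h 1)) as [|Hlt]; auto. exfalso.
    destruct (IVT (fun t => IZR k - h t) 0 1) as [t [Ht Hz]]; [reg|lra|lra|lra|].
    apply (Hn t Ht). exists k. lra.
  - destruct (Rlt_le_dec (h 1) (IZR k + 1)) as [|[Hlt|Heq]]; auto; exfalso.
    + destruct (IVT (fun t => h t - (IZR k + 1)) 0 1) as [t [Ht Hz]]; [reg|lra|lra|lra|].
      apply (Hn t Ht). exists (k + 1)%Z. rewrite plus_IZR. lra.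
    + apply (Hn 1); [lra|]. exists (k + 1)%Z. rewrite plus_IZR. lra.
Qed.

Lemma segment_not_int x y t : ~ is_int x -> ~ is_int y -> Int_part x = Int_part y ->
  0 <= t <= 1 -> ~ is_int (x + t * (y - x)).
Proof.
  intros Hx Hy Hxy Ht. apply (not_is_int _ (Int_part x)).
  destruct (Int_part_lt x Hx), (Int_part_lt y Hy). rewrite <- Hxy in *.
  set (k := IZR (Int_part x)) in *.
  assert (0 <= t * (y - k) /\ 0 <= t * (k + 1 - y)) by (split; apply Rmult_le_pos; lra).
  assert (0 <= (1 - t) * (x - k) /\ 0 <= (1 - t) * (k + 1 - x))
    by (split; apply Rmult_le_pos; lra).
  destruct (Req_dec t 0) as [->|Ht0]; [lra|].
  assert (0 < t * (y - k) /\ 0 < t * (k + 1 - y)) by (split; apply Rmult_lt_0_compat; lra).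
  split; nra.
Qed.

Definition Zrange (a b : Z) : list Z :=
  map (fun k => (a + Z.of_nat k)%Z) (seq 0 (Z.to_nat (b - a + 1))).

Lemma In_Zrange a b n : In n (Zrange a b) <-> (a <= n <= b)%Z.
Proof.
  unfold Zrange. rewrite in_map_iff. split.
  - intros [k [<- Hk]]. apply in_seq in Hk. lia.
  - intros H. exists (Z.to_nat (n - a)). split; [lia|]. apply in_seq. lia.
Qed.

Lemma NoDup_Zrange a b : NoDup (Zrange a b).
Proof.
  apply Injective_map_NoDup; [|apply seq_NoDup]. intros x y H. lia.
Qed.

Lemma length_Zrange a b : length (Zrange a b) = Z.to_nat (b - a + 1).
Proof. unfold Zrange. rewrite length_map, length_seq. auto. Qed.

Lemma up_le_iff x n : (up x <= n)%Z <-> x < IZR n.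
Proof.
  destruct (archimed x) as [H1 H2]. split; intros H.
  - apply IZR_le in H. lra.
  - destruct (Z_le_gt_dec (up x) n); auto. exfalso.
    assert (n <= up x - 1)%Z by lia. apply IZR_le in H0. rewrite minus_IZR in H0. lra.
Qed.

Lemma le_opp_up_opp_iff y n : (n <= - up (- y))%Z <-> IZR n < y.
Proof.
  split; intros H.
  - assert (up (-y) <= - n)%Z by lia. apply up_le_iff in H0. rewrite opp_IZR in H0. lra.
  - assert (up (-y) <= - n)%Z by (apply up_le_iff; rewrite opp_IZR; lra). lia.
Qed.

Definition ints (x y : R) : list Z := Zrange (up x) (- up (- y)).

Lemma In_ints x y n : In n (ints x y) <-> x < IZR n < y.
Proof. unfold ints. rewrite In_Zrange, up_le_iff, le_opp_up_opp_iff. tauto. Qed.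

Definition nints (x y : R) : nat := Z.to_nat (- up (- y) - up x + 1).

Lemma length_ints x y : length (ints x y) = nints x y.
Proof. unfold ints. rewrite length_Zrange. auto. Qed.

Lemma length_Zrange_Int_part x y : x < y ->
  length (Zrange (Int_part x) (- up (- y))) = S (nints x y).
Proof.
  intros Hxy. rewrite length_Zrange. unfold nints, Int_part.
  assert (up x - 1 <= - up (- y))%Z.
  { apply le_opp_up_opp_iff. destruct (archimed x). rewrite minus_IZR. lra. }
  lia.
Qed.

Definition int_indicator (z : R) : nat :=
  if excluded_middle_informative (is_int z) then 1%nat else 0%nat.

Lemma up_IZR k : up (IZR k) = (k + 1)%Z.
Proof. symmetry. apply tech_up; rewrite plus_IZR; lra. Qed.

Lemma up_add_up_opp z : ~ is_int z -> (up z + up (- z) = 1)%Z.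
Proof.
  intros Hz. destruct (Int_part_lt z Hz). unfold Int_part in *.
  rewrite minus_IZR in *.
  assert (up (- z) = 1 - up z)%Z; [|lia].
  symmetry. apply tech_up; rewrite minus_IZR; lra.
Qed.

Lemma nints_split x z y : x < z < y ->
  nints x y = (nints x z + nints z y + int_indicator z)%nat.
Proof.
  intros [Hxz Hzy]. unfold nints, int_indicator.
  assert (Hx : (up x - 1 <= - up (- z))%Z).
  { apply le_opp_up_opp_iff. destruct (archimed x). rewrite minus_IZR. lra. }
  assert (Hz : (up z - 1 <= - up (- y))%Z).
  { apply le_opp_up_opp_iff. destruct (archimed z). rewrite minus_IZR. lra. }
  destruct (excluded_middle_informative (is_int z)) as [[k ->]|Hint].
  - rewrite <- opp_IZR, !up_IZR in *. lia.
  - pose proof (up_add_up_opp z Hint). lia.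
Qed.

Lemma nints_empty z : nints z z = 0%nat.
Proof.
  unfold nints. destruct (archimed z), (archimed (- z)).
  assert (0 < up z + up (- z))%Z by (apply lt_IZR; rewrite plus_IZR; lra). lia.
Qed.

Lemma nints_add_IZR x y k : nints (x + IZR k) (y + IZR k) = nints x y.
Proof.
  unfold nints. replace (- (y + IZR k)) with (- y + IZR (- k)) by (rewrite opp_IZR; ring).
  assert (Hup : forall u j, up (u + IZR j) = (up u + j)%Z).
  { intros u j. symmetry. destruct (archimed u). apply tech_up; rewrite plus_IZR; lra. }
  rewrite !Hup. f_equal. lia.
Qed.

Lemma int_indicator_add_IZR z k : int_indicator (z + IZR k) = int_indicator z.
Proof.
  unfold int_indicator.
  destruct (excluded_middle_informative (is_int (z + IZR k))) as [Hzk|Hzk];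
  destruct (excluded_middle_informative (is_int z)) as [Hz|Hz]; auto; exfalso.
  - apply Hz. replace z with (z + IZR k + IZR (- k)) by (rewrite opp_IZR; ring).
    apply is_int_add_IZR. auto.
  - apply Hzk. apply is_int_add_IZR. auto.
Qed.

Lemma int_indicator_le_1 z : (int_indicator z <= 1)%nat.
Proof. unfold int_indicator. destruct (excluded_middle_informative (is_int z)); lia. Qed.

Lemma int_indicator_1 z : int_indicator z = 1%nat -> is_int z.
Proof. unfold int_indicator. destruct (excluded_middle_informative (is_int z)); auto. lia. Qed.

Definition ints_between (x y : R) : list Z := ints (Rmin x y) (Rmax x y).

Definition nints_between (x y : R) : nat := nints (Rmin x y) (Rmax x y).

Lemma length_ints_between x y : length (ints_between x y) = nints_between x y.
Proof. apply length_ints. Qed.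

Lemma Rdiv_in_01 x d : 0 < x < d -> 0 < x / d < 1.
Proof.
  intros [H1 H2]. split; [apply Rdiv_lt_0_compat; lra|].
  apply (Rmult_lt_reg_r d); [lra|]. unfold Rdiv. rewrite Rmult_assoc, Rinv_l by lra. lra.
Qed.

Lemma ints_between_offset_param z c N :
  In N (ints_between z (z + c)) -> c <> 0 /\ 0 < (IZR N - z) / c < 1.
Proof.
  unfold ints_between. rewrite In_ints. intros H.
  destruct (Rtotal_order c 0) as [Hc|[->|Hc]].
  - rewrite Rmin_right, Rmax_left in H by lra. split; [lra|].
    replace ((IZR N - z) / c) with ((z - IZR N) / - c) by (field; lra).
    apply Rdiv_in_01. lra.
  - rewrite Rplus_0_r, Rmin_left, Rmax_left in H by lra. lra.
  - rewrite Rmin_left, Rmax_right in H by lra. split; [lra|].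
    apply Rdiv_in_01. lra.
Qed.

Lemma In_ints_between_offset z c s N : c <> 0 -> 0 < s < 1 -> IZR N = z + c * s ->
  In N (ints_between z (z + c)).
Proof.
  intros Hc Hs HN. unfold ints_between. rewrite In_ints, HN.
  destruct (Rtotal_order c 0) as [Hlt|[Heq|Hlt]]; [|lra|].
  - rewrite Rmin_right, Rmax_left by lra. split; nra.
  - rewrite Rmin_left, Rmax_right by lra. split; nra.
Qed.

Lemma int_indicator_0 z : ~ is_int z -> int_indicator z = 0%nat.
Proof. unfold int_indicator. destruct (excluded_middle_informative (is_int z)); tauto. Qed.

Lemma nints_split_le x z y : x <= z <= y -> x < y -> ((x = z \/ z = y) -> ~ is_int z) ->
  nints x y = (nints x z + nints z y + int_indicator z)%nat.
Proof.
  intros [[H1|<-] [H2|<-]] Hxy Hend; [apply nints_split; lra| | |lra];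
    rewrite nints_empty, int_indicator_0 by auto; lia.
Qed.

Lemma nints_between_opposite z a b : a * b <= 0 -> a <> b ->
  ((a = 0 \/ b = 0) -> ~ is_int z) ->
  nints_between (z + b) (z + a) =
  (nints_between z (z + a) + nints_between z (z + b) + int_indicator z)%nat.
Proof.
  intros Hab Hne Hz. unfold nints_between.
  assert (Hsign : (0 <= a /\ b <= 0) \/ (a <= 0 /\ 0 <= b)).
  { destruct (Rle_lt_dec 0 a), (Rle_lt_dec 0 b); try nra; auto. }
  destruct Hsign.
  - rewrite (Rmin_left (z + b)), (Rmax_right (z + b)), (Rmin_left z (z + a)),
      (Rmax_right z (z + a)), (Rmin_right z), (Rmax_left z) by lra.
    rewrite (nints_split_le (z + b) z (z + a)); [lia|lra|lra|].
    intros Hend. apply Hz. lra.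
  - rewrite (Rmin_right (z + b)), (Rmax_left (z + b)), (Rmin_right z (z + a)),
      (Rmax_left z (z + a)), (Rmin_left z), (Rmax_right z) by lra.
    rewrite (nints_split_le (z + a) z (z + b)); [lia|lra|lra|].
    intros Hend. apply Hz. lra.
Qed.

Lemma nints_between_add_IZR x y k : nints_between (x + IZR k) (y + IZR k) = nints_between x y.
Proof.
  unfold nints_between.
  replace (Rmin (x + IZR k) (y + IZR k)) with (Rmin x y + IZR k)
    by (unfold Rmin; destruct (Rle_dec x y), (Rle_dec (x + IZR k) (y + IZR k)); lra).
  replace (Rmax (x + IZR k) (y + IZR k)) with (Rmax x y + IZR k)
    by (unfold Rmax; destruct (Rle_dec x y), (Rle_dec (x + IZR k) (y + IZR k)); lra).
  apply nints_add_IZR.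
Qed.

Lemma opposite_combination_between a b s r : a * b <= 0 -> a <> b ->
  0 < s < 1 -> 0 < r < 1 -> Rmin b a < a * s + b * r < Rmax b a.
Proof.
  intros Hab Hne Hs Hr.
  assert (Hsign : (0 <= a /\ b <= 0) \/ (a <= 0 /\ 0 <= b)).
  { destruct (Rle_lt_dec 0 a), (Rle_lt_dec 0 b); try nra; auto. }
  destruct Hsign as [[Ha Hb]|[Ha Hb]].
  - rewrite Rmin_left, Rmax_right by lra.
    destruct (Req_dec a 0), (Req_dec b 0); try lra; split; nra.
  - rewrite Rmin_right, Rmax_left by lra.
    destruct (Req_dec a 0), (Req_dec b 0); try lra; split; nra.
Qed.

(** * Toric lines as level sets of linear forms *)

Definition line_form (l : tline) (p : R * R) : R :=
  IZR (ta l) * fst p + IZR (tb l) * snd p - tc l.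

Definition translate (p : R * R) (m n : Z) : R * R := (fst p + IZR m, snd p + IZR n).

Lemma on_line_iff l p : on_line l p <-> is_int (line_form l p).
Proof. unfold on_line, is_int, line_form. split; intros [k Hk]; exists k; lra. Qed.

Lemma line_form_translate l p m n :
  line_form l (translate p m n) = line_form l p + IZR (ta l * m + tb l * n).
Proof. unfold line_form, translate. simpl. rewrite plus_IZR, !mult_IZR. ring. Qed.

Lemma torus_eq_translate p q : torus_eq p q <-> exists m n, p = translate q m n.
Proof.
  unfold torus_eq, translate. split.
  - intros [m [n [H1 H2]]]. exists m, n. destruct p, q. simpl in *. f_equal; lra.
  - intros [m [n ->]]. exists m, n. simpl. split; ring.
Qed.

Lemma torus_eq_sym p q : torus_eq p q -> torus_eq q p.
Proof. intros [m [n [H1 H2]]]. exists (- m)%Z, (- n)%Z. rewrite !opp_IZR. lra. Qed.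

Lemma torus_eq_trans p q r : torus_eq p q -> torus_eq q r -> torus_eq p r.
Proof.
  intros [m [n [H1 H2]]] [m' [n' [H3 H4]]]. exists (m + m')%Z, (n + n')%Z.
  rewrite !plus_IZR. lra.
Qed.

Lemma on_line_translate l p m n : on_line l (translate p m n) <-> on_line l p.
Proof.
  rewrite !on_line_iff, line_form_translate. split; [|apply is_int_add_IZR].
  intros H. replace (line_form l p) with
    (line_form l p + IZR (ta l * m + tb l * n) + IZR (- (ta l * m + tb l * n)))
    by (rewrite opp_IZR; ring).
  apply is_int_add_IZR. auto.
Qed.

Lemma on_union_translate A p m n : on_union A (translate p m n) <-> on_union A p.
Proof. unfold on_union. setoid_rewrite on_line_translate. tauto. Qed.

Lemma is_vertex_translate A p m n : is_vertex A p -> is_vertex A (translate p m n).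
Proof.
  intros [l1 [l2 [H1 [H2 [Hn [O1 O2]]]]]]. exists l1, l2.
  rewrite !on_line_translate. auto.
Qed.

(* Along a path the forms never cross an integer; conversely the straight segment
   stays in the chamber. *)
Lemma same_chamber_iff A p q :
  same_chamber A p q <->
  ~ on_union A p /\ ~ on_union A q /\
  exists m n, forall l, In l A ->
    Int_part (line_form l p) = Int_part (line_form l (translate q m n)).
Proof.
  split.
  - intros [Hp [Hq [g1 [g2 [Hc1 [Hc2 [E1 [E2 [Ht Hav]]]]]]]]].
    apply torus_eq_translate in Ht. destruct Ht as [m [n Hmn]].
    split; [auto|split; [auto|]]. exists m, n. intros l Hl. rewrite <- Hmn.
    replace p with (g1 0, g2 0) by (destruct p; simpl in *; congruence).
    apply (Int_part_path (fun t => line_form l (g1 t, g2 t)));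
      [unfold line_form; simpl; reg|].
    intros t Ht Hint. apply (Hav t Ht). exists l. rewrite on_line_iff. auto.
  - intros [Hp [Hq [m [n Hfl]]]]. set (q' := translate q m n) in *.
    assert (Hq' : ~ on_union A q') by (unfold q'; rewrite on_union_translate; auto).
    split; [auto|split; [auto|]].
    exists (fun t => fst p + t * (fst q' - fst p)), (fun t => snd p + t * (snd q' - snd p)).
    split; [reg|]. split; [reg|]. split; [ring|]. split; [ring|]. split.
    + apply torus_eq_translate. exists m, n. fold q'. destruct q'. simpl. f_equal; ring.
    + intros t Ht [l [Hl Hon]]. rewrite on_line_iff in Hon.
      replace (line_form l _) with
        (line_form l p + t * (line_form l q' - line_form l p)) in Hon
        by (unfold line_form; simpl; ring).
      revert Hon. apply segment_not_int; auto;
        intros Hint; [apply Hp | apply Hq']; exists l; rewrite on_line_iff; auto.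
Qed.

Lemma Int_part_line_form_translate l p m n :
  Int_part (line_form l (translate p m n)) = (Int_part (line_form l p) + (ta l * m + tb l * n))%Z.
Proof. rewrite line_form_translate. apply Int_part_add_IZR. Qed.

Lemma same_chamber_sym A p q : same_chamber A p q -> same_chamber A q p.
Proof.
  rewrite !same_chamber_iff. intros [Hp [Hq [m [n H]]]].
  split; [auto|split; [auto|]]. exists (- m)%Z, (- n)%Z. intros l Hl.
  specialize (H l Hl). rewrite !Int_part_line_form_translate in *. lia.
Qed.

Lemma same_chamber_trans A p q r :
  same_chamber A p q -> same_chamber A q r -> same_chamber A p r.
Proof.
  rewrite !same_chamber_iff. intros [Hp [_ [m [n H1]]]] [Hq [Hr [m' [n' H2]]]].
  split; [auto|split; [auto|]]. exists (m + m')%Z, (n + n')%Z. intros l Hl.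
  specialize (H1 l Hl). specialize (H2 l Hl).
  rewrite !Int_part_line_form_translate in *. lia.
Qed.

(** * Three lines, the first two not parallel *)

Inductive vertex_label := Corner | OnBottom (N : Z) | OnLeft (N : Z).

Section ThreeLines.
Variables (a1 b1 a2 b2 a3 b3 : Z) (c1 c2 c3 : R).

Definition line1 := mkTline a1 b1 c1.
Definition line2 := mkTline a2 b2 c2.
Definition line3 := mkTline a3 b3 c3.
Definition lines := line1 :: line2 :: line3 :: nil.

Local Notation phi1 := (line_form line1).
Local Notation phi2 := (line_form line2).
Local Notation phi3 := (line_form line3).

Definition det12 : Z := (a1 * b2 - a2 * b1)%Z.
Definition det32 : Z := (a3 * b2 - a2 * b3)%Z.
Definition det13 : Z := (a1 * b3 - a3 * b1)%Z.

Hypothesis det12_neq0 : det12 <> 0%Z.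

Let det12_R : IZR a1 * IZR b2 - IZR a2 * IZR b1 <> 0.
Proof. rewrite <- !mult_IZR, <- minus_IZR. apply not_0_IZR. exact det12_neq0. Qed.

(* By Cramer's rule, [(a3, b3) = alpha (a1, b1) + beta (a2, b2)]. *)
Definition alpha : R := IZR det32 / IZR det12.
Definition beta : R := IZR det13 / IZR det12.
Definition gamma : R := alpha * c1 + beta * c2 - c3.

Lemma line3_combination :
  IZR a3 = alpha * IZR a1 + beta * IZR a2 /\ IZR b3 = alpha * IZR b1 + beta * IZR b2.
Proof.
  unfold alpha, beta, det12, det32, det13. rewrite !minus_IZR, !mult_IZR.
  split; field; exact det12_R.
Qed.

Lemma phi3_decomp p : phi3 p = alpha * phi1 p + beta * phi2 p + gamma.
Proof.
  unfold line_form, gamma. simpl. destruct line3_combination as [-> ->]. ring.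
Qed.

Definition point_of (u w : R) : R * R :=
  (((u + c1) * IZR b2 - (w + c2) * IZR b1) / IZR det12,
   (IZR a1 * (w + c2) - IZR a2 * (u + c1)) / IZR det12).

Lemma phi1_point_of u w : phi1 (point_of u w) = u.
Proof.
  unfold line_form, point_of, det12 in *. simpl. rewrite !minus_IZR, !mult_IZR in *.
  field. exact det12_R.
Qed.

Lemma phi2_point_of u w : phi2 (point_of u w) = w.
Proof.
  unfold line_form, point_of, det12 in *. simpl. rewrite !minus_IZR, !mult_IZR in *.
  field. exact det12_R.
Qed.

Lemma phi3_point_of u w : phi3 (point_of u w) = alpha * u + beta * w + gamma.
Proof. rewrite phi3_decomp, phi1_point_of, phi2_point_of. auto. Qed.

Lemma point_of_phi p : point_of (phi1 p) (phi2 p) = p.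
Proof.
  destruct p as [x y]. unfold line_form, point_of, det12 in *. simpl.
  rewrite !minus_IZR, !mult_IZR in *. f_equal; field; exact det12_R.
Qed.

Lemma on_union_lines p : on_union lines p <-> is_int (phi1 p) \/ is_int (phi2 p) \/ is_int (phi3 p).
Proof.
  unfold on_union, lines. rewrite <- !on_line_iff. split.
  - intros [l [Hl Hp]]. simpl in Hl. destruct Hl as [<-|[<-|[<-|[]]]]; tauto.
  - intros [H|[H|H]]; eexists; split; eauto; simpl; tauto.
Qed.

Lemma is_vertex_lines p : is_vertex lines p ->
  (is_int (phi1 p) /\ is_int (phi2 p)) \/ (is_int (phi1 p) /\ is_int (phi3 p)) \/
  (is_int (phi2 p) /\ is_int (phi3 p)).
Proof.
  intros [l1 [l2 [H1 [H2 [Hn [O1 O2]]]]]]. rewrite on_line_iff in O1, O2.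
  simpl in H1, H2. destruct H1 as [<-|[<-|[<-|[]]]]; destruct H2 as [<-|[<-|[<-|[]]]];
    auto; exfalso; apply Hn; intros q; tauto.
Qed.

(* The cells are the unit squares of the grid in the coordinates [(phi1, phi2)];
   translating by [(m, n)] in [Z^2] moves cells by [(a1 m + b1 n, a2 m + b2 n)]. *)
Definition cell (p : R * R) : Z * Z := (Int_part (phi1 p), Int_part (phi2 p)).

Definition cell_equiv (q q' : Z * Z) : Prop :=
  exists m n, (fst q - fst q' = a1 * m + b1 * n)%Z /\ (snd q - snd q' = a2 * m + b2 * n)%Z.

Global Instance cell_equiv_Equivalence : Equivalence cell_equiv.
Proof.
  split.
  - intros q. exists 0%Z, 0%Z. lia.
  - intros q q' [m [n [H1 H2]]]. exists (- m)%Z, (- n)%Z. lia.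
  - intros q q' q'' [m [n [H1 H2]]] [m' [n' [H3 H4]]]. exists (m + m')%Z, (n + n')%Z. lia.
Qed.

Lemma cell_translate p m n : cell (translate p m n) =
  (fst (cell p) + (a1 * m + b1 * n), snd (cell p) + (a2 * m + b2 * n))%Z.
Proof. unfold cell. rewrite !Int_part_line_form_translate. auto. Qed.

Lemma cell_equiv_translate p m n : cell_equiv (cell (translate p m n)) (cell p).
Proof. rewrite cell_translate. exists m, n. simpl. lia. Qed.

Lemma exists_translate_to_cell p q : cell_equiv q (cell p) ->
  exists m n, cell (translate p m n) = q.
Proof.
  intros [m [n [H1 H2]]]. exists m, n. rewrite cell_translate.
  destruct q. simpl in *. f_equal; lia.
Qed.

Lemma translate_same_cell p m n : cell (translate p m n) = cell p -> translate p m n = p.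
Proof.
  rewrite cell_translate. destruct (cell p) as [i j]. intros [= H1 H2].
  assert (E1 : (a1 * m + b1 * n = 0)%Z) by lia.
  assert (E2 : (a2 * m + b2 * n = 0)%Z) by lia.
  assert (Hm : (det12 * m = b2 * (a1 * m + b1 * n) - b1 * (a2 * m + b2 * n))%Z)
    by (unfold det12; ring).
  assert (Hn : (det12 * n = a1 * (a2 * m + b2 * n) - a2 * (a1 * m + b1 * n))%Z)
    by (unfold det12; ring).
  rewrite E1, E2, !Z.mul_0_r in Hm, Hn.
  apply Z.mul_eq_0 in Hm, Hn.
  destruct Hm as [Hd| ->]; [contradiction|]. destruct Hn as [Hd| ->]; [contradiction|].
  destruct p. unfold translate. simpl. f_equal; ring.
Qed.

Definition corner_value (q : Z * Z) : R := alpha * IZR (fst q) + beta * IZR (snd q) + gamma.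

Lemma cell_decomposition p : exists s t, 0 <= s < 1 /\ 0 <= t < 1 /\
  p = point_of (IZR (fst (cell p)) + s) (IZR (snd (cell p)) + t) /\
  (is_int (phi1 p) <-> s = 0) /\ (is_int (phi2 p) <-> t = 0) /\
  phi3 p = corner_value (cell p) + alpha * s + beta * t.
Proof.
  exists (phi1 p - IZR (Int_part (phi1 p))), (phi2 p - IZR (Int_part (phi2 p))).
  destruct (Int_part_bounds (phi1 p)), (Int_part_bounds (phi2 p)).
  unfold cell, corner_value. simpl. rewrite !is_int_iff_Int_part.
  split; [lra|split; [lra|split; [|split; [tauto|split; [tauto|]]]]].
  - rewrite <- (point_of_phi p) at 1. f_equal; ring.
  - rewrite phi3_decomp. ring.
Qed.

Hypothesis distinct12 : ~ same_tline line1 line2.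
Hypothesis distinct13 : ~ same_tline line1 line3.
Hypothesis distinct23 : ~ same_tline line2 line3.
Hypothesis det_sign : (det32 * det13 <= 0)%Z.
Hypothesis line3_nonzero : ~ (a3 = 0 /\ b3 = 0)%Z.
Hypothesis parallel13_disjoint : det13 = 0%Z -> forall p, on_line line1 p -> ~ on_line line3 p.
Hypothesis parallel23_disjoint : det32 = 0%Z -> forall p, on_line line2 p -> ~ on_line line3 p.

Lemma alpha_beta_nonpos : alpha * beta <= 0.
Proof.
  assert (Hd : IZR det12 <> 0) by (apply not_0_IZR; auto).
  apply IZR_le in det_sign. rewrite mult_IZR in det_sign.
  assert (0 < / IZR det12 * / IZR det12) by (apply Rsqr_pos_lt, Rinv_neq_0_compat; auto).
  unfold alpha, beta, Rdiv. nra.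
Qed.

Lemma IZR_div_det12_eq0 k : IZR k / IZR det12 = 0 -> k = 0%Z.
Proof.
  intros H. apply eq_IZR. assert (IZR det12 <> 0) by (apply not_0_IZR; auto).
  apply (Rmult_eq_reg_r (/ IZR det12)); [|apply Rinv_neq_0_compat; auto].
  unfold Rdiv in H. lra.
Qed.

Lemma alpha_neq_beta : alpha <> beta.
Proof.
  intros He. apply line3_nonzero.
  assert (E : det32 = det13).
  { apply Zminus_eq, IZR_div_det12_eq0. rewrite minus_IZR. unfold alpha, beta in He.
    unfold Rdiv in *. rewrite Rmult_minus_distr_r, He. ring. }
  assert (E32 : det32 = 0%Z) by nia.
  assert (E13 : det13 = 0%Z) by lia.
  assert (Ha3 : (a3 * det12 = a1 * det32 + a2 * det13)%Z) by (unfold det12, det32, det13; ring).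
  assert (Hb3 : (b3 * det12 = b1 * det32 + b2 * det13)%Z) by (unfold det12, det32, det13; ring).
  rewrite E32, E13 in Ha3, Hb3. split; nia.
Qed.

Lemma alpha_neq0 p : is_int (phi2 p) -> is_int (phi3 p) -> alpha <> 0.
Proof.
  intros H2 H3 H0. apply (parallel23_disjoint (IZR_div_det12_eq0 _ H0) p);
    apply on_line_iff; auto.
Qed.

Lemma beta_neq0 p : is_int (phi1 p) -> is_int (phi3 p) -> beta <> 0.
Proof.
  intros H1 H3 H0. apply (parallel13_disjoint (IZR_div_det12_eq0 _ H0) p);
    apply on_line_iff; auto.
Qed.

Lemma phi_corner q :
  phi1 (point_of (IZR (fst q)) (IZR (snd q))) = IZR (fst q) /\
  phi2 (point_of (IZR (fst q)) (IZR (snd q))) = IZR (snd q) /\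
  phi3 (point_of (IZR (fst q)) (IZR (snd q))) = corner_value q.
Proof. rewrite phi1_point_of, phi2_point_of, phi3_point_of. auto. Qed.

(* If line 3 is parallel to line 1 or 2, it avoids the corners of the cells. *)
Lemma corner_value_not_int q : (alpha = 0 \/ beta = 0) -> ~ is_int (corner_value q).
Proof.
  destruct (phi_corner q) as [E1 [E2 E3]]. intros [H|H] Hint.
  - apply (alpha_neq0 (point_of (IZR (fst q)) (IZR (snd q)))); auto;
      [rewrite E2; exists (snd q) | rewrite E3]; auto.
  - apply (beta_neq0 (point_of (IZR (fst q)) (IZR (snd q)))); auto;
      [rewrite E1; exists (fst q) | rewrite E3]; auto.
Qed.

(* The vertices in the cell [q]: its lower left corner, the points of line 3 on its
   bottom edge (labelled by the integer value [N] of [phi3]), and those on its left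
   edge. *)
Definition vertex_labels (q : Z * Z) : list vertex_label :=
  Corner :: map OnBottom (ints_between (corner_value q) (corner_value q + alpha))
    ++ map OnLeft (ints_between (corner_value q) (corner_value q + beta)).

Definition vertex_rep (q : Z * Z) (v : vertex_label) : R * R :=
  match v with
  | Corner => point_of (IZR (fst q)) (IZR (snd q))
  | OnBottom N => point_of (IZR (fst q) + (IZR N - corner_value q) / alpha) (IZR (snd q))
  | OnLeft N => point_of (IZR (fst q)) (IZR (snd q) + (IZR N - corner_value q) / beta)
  end.

Definition cell_vertex_count (z : R) : nat :=
  (1 + nints_between z (z + alpha) + nints_between z (z + beta))%nat.

Lemma length_vertex_labels q : length (vertex_labels q) = cell_vertex_count (corner_value q).
Proof.
  unfold vertex_labels, cell_vertex_count. simpl.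
  rewrite length_app, !length_map, !length_ints_between. lia.
Qed.

Lemma NoDup_vertex_labels q : NoDup (vertex_labels q).
Proof.
  unfold vertex_labels. constructor.
  - rewrite in_app_iff, !in_map_iff. intros [[N [H _]]|[N [H _]]]; discriminate.
  - apply NoDup_app.
    + apply Injective_map_NoDup; [intros x y [=]; auto | apply NoDup_Zrange].
    + apply Injective_map_NoDup; [intros x y [=]; auto | apply NoDup_Zrange].
    + intros v. rewrite !in_map_iff. intros [N [<- _]] [N' [H _]]. discriminate.
Qed.

Lemma vertex_rep_forms q v : In v (vertex_labels q) ->
  exists s t, 0 <= s < 1 /\ 0 <= t < 1 /\
    phi1 (vertex_rep q v) = IZR (fst q) + s /\ phi2 (vertex_rep q v) = IZR (snd q) + t /\
    match v with
    | Corner => s = 0 /\ t = 0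
    | OnBottom N => 0 < s /\ t = 0 /\ phi3 (vertex_rep q v) = IZR N
    | OnLeft N => s = 0 /\ 0 < t /\ phi3 (vertex_rep q v) = IZR N
    end.
Proof.
  unfold vertex_labels. simpl. rewrite in_app_iff, !in_map_iff.
  intros [<-|[[N [<- HN]]|[N [<- HN]]]]; simpl;
    rewrite ?phi1_point_of, ?phi2_point_of, ?phi3_point_of.
  - exists 0, 0. repeat split; lra.
  - destruct (ints_between_offset_param _ _ _ HN) as [Ha Hs].
    exists ((IZR N - corner_value q) / alpha), 0. repeat split; try lra.
    unfold corner_value. field. auto.
  - destruct (ints_between_offset_param _ _ _ HN) as [Hb Ht].
    exists 0, ((IZR N - corner_value q) / beta). repeat split; try lra.
    unfold corner_value. field. auto.
Qed.

Lemma vertex_rep_cell q v : In v (vertex_labels q) -> cell (vertex_rep q v) = q.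
Proof.
  intros Hv. destruct (vertex_rep_forms q v Hv) as [s [t [Hs [Ht [E1 [E2 _]]]]]].
  unfold cell. rewrite E1, E2, (Int_part_eq _ (fst q)), (Int_part_eq _ (snd q)) by lra.
  destruct q. auto.
Qed.

Lemma vertex_rep_is_vertex q v : In v (vertex_labels q) -> is_vertex lines (vertex_rep q v).
Proof.
  intros Hv. destruct (vertex_rep_forms q v Hv) as [s [t [_ [_ [E1 [E2 Ev]]]]]].
  assert (I1 : s = 0 -> on_line line1 (vertex_rep q v))
    by (intros ->; apply on_line_iff; rewrite E1; exists (fst q); ring).
  assert (I2 : t = 0 -> on_line line2 (vertex_rep q v))
    by (intros ->; apply on_line_iff; rewrite E2; exists (snd q); ring).
  unfold is_vertex, lines. destruct v as [|N|N]; decompose [and] Ev.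
  - exists line1, line2. simpl. auto 6.
  - exists line2, line3. simpl. split; [|split; [|split; [|split]]]; auto.
    apply on_line_iff. exists N. auto.
  - exists line1, line3. simpl. split; [|split; [|split; [|split]]]; auto.
    apply on_line_iff. exists N. auto.
Qed.

Lemma vertex_rep_inj q v v' : In v (vertex_labels q) -> In v' (vertex_labels q) ->
  vertex_rep q v = vertex_rep q v' -> v = v'.
Proof.
  intros Hv Hv' E.
  destruct (vertex_rep_forms q v Hv) as [s [t [_ [_ [E1 [E2 Ev]]]]]].
  destruct (vertex_rep_forms q v' Hv') as [s' [t' [_ [_ [E1' [E2' Ev']]]]]].
  rewrite E in E1, E2. assert (s = s' /\ t = t') as [<- <-] by lra.
  destruct v as [|N|N], v' as [|N'|N']; decompose [and] Ev; decompose [and] Ev';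
    try lra; auto; f_equal; apply eq_IZR; congruence.
Qed.

Lemma vertex_rep_complete p : is_vertex lines p ->
  exists v, In v (vertex_labels (cell p)) /\ vertex_rep (cell p) v = p.
Proof.
  intros Hp. destruct (cell_decomposition p) as [s [t [Hs [Ht [Ep [E1 [E2 E3]]]]]]].
  set (q := cell p) in *.
  assert (Hcorner : s = 0 -> t = 0 -> exists v, In v (vertex_labels q) /\ vertex_rep q v = p).
  { intros -> ->. exists Corner. split; [left; auto|]. rewrite Ep at 1. simpl. f_equal; ring. }
  destruct (is_vertex_lines p Hp) as [[H1 H2]|[[H1 [N HN]]|[H2 [N HN]]]].
  - apply Hcorner; tauto.
  - apply E1 in H1. subst s. destruct (Req_dec t 0) as [->|Ht0]; [apply Hcorner; auto|].
    assert (Hb : beta <> 0) by (apply (beta_neq0 p); [apply E1 | exists N]; auto).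
    exists (OnLeft N). split.
    + right. apply in_or_app. right. apply in_map.
      apply (In_ints_between_offset _ _ t); auto; lra.
    + rewrite Ep at 1. simpl. f_equal; [ring|]. rewrite HN in E3. rewrite E3. field. auto.
  - apply E2 in H2. subst t. destruct (Req_dec s 0) as [->|Hs0]; [apply Hcorner; auto|].
    assert (Ha : alpha <> 0) by (apply (alpha_neq0 p); [apply E2 | exists N]; auto).
    exists (OnBottom N). split.
    + right. apply in_or_app. left. apply in_map.
      apply (In_ints_between_offset _ _ s); auto; lra.
    + rewrite Ep at 1. simpl. f_equal; [|ring]. rewrite HN in E3. rewrite E3. field. auto.
Qed.

(* On the open cell [q], [phi3] ranges over the open interval between its values
   [corner_value q + beta] and [corner_value q + alpha] at the two other corners of
   the anti-diagonal (as [alpha * beta <= 0]); the chambers in the cell are the slices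
   [n < phi3 < n + 1] that meet this interval. *)
Definition chamber_low (q : Z * Z) : R := Rmin (corner_value q + beta) (corner_value q + alpha).
Definition chamber_high (q : Z * Z) : R := Rmax (corner_value q + beta) (corner_value q + alpha).

Definition chamber_labels (q : Z * Z) : list Z :=
  Zrange (Int_part (chamber_low q)) (- up (- chamber_high q)).

Definition chamber_value (q : Z * Z) (n : Z) : R :=
  (Rmax (chamber_low q) (IZR n) + Rmin (chamber_high q) (IZR n + 1)) / 2.

Definition chamber_param (q : Z * Z) (n : Z) : R :=
  (chamber_value q n - (corner_value q + beta)) / (alpha - beta).

Definition chamber_rep (q : Z * Z) (n : Z) : R * R :=
  point_of (IZR (fst q) + chamber_param q n) (IZR (snd q) + 1 - chamber_param q n).

Lemma chamber_low_lt_high q : chamber_low q < chamber_high q.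
Proof.
  pose proof alpha_neq_beta. unfold chamber_low, chamber_high, Rmin, Rmax.
  destruct (Rle_dec (corner_value q + beta) (corner_value q + alpha)); lra.
Qed.

Lemma In_chamber_labels q n :
  In n (chamber_labels q) <-> IZR (Int_part (chamber_low q)) <= IZR n < chamber_high q.
Proof.
  unfold chamber_labels. rewrite In_Zrange, le_opp_up_opp_iff.
  split; intros [H1 H2]; split; auto; [apply IZR_le | apply le_IZR]; auto.
Qed.

Lemma chamber_value_bounds q n : In n (chamber_labels q) ->
  chamber_low q < chamber_value q n < chamber_high q /\
  IZR n < chamber_value q n < IZR n + 1.
Proof.
  rewrite In_chamber_labels. intros [Hn1 Hn2]. pose proof (chamber_low_lt_high q).
  destruct (Int_part_bounds (chamber_low q)).
  unfold chamber_value, Rmax, Rmin.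
  destruct (Rle_dec (chamber_low q) (IZR n)), (Rle_dec (chamber_high q) (IZR n + 1)); lra.
Qed.

Lemma chamber_rep_forms q n : In n (chamber_labels q) ->
  exists s, 0 < s < 1 /\
    phi1 (chamber_rep q n) = IZR (fst q) + s /\
    phi2 (chamber_rep q n) = IZR (snd q) + (1 - s) /\
    IZR n < phi3 (chamber_rep q n) < IZR n + 1.
Proof.
  intros Hn. destruct (chamber_value_bounds q n Hn) as [[H1 H2] H3].
  pose proof alpha_neq_beta.
  assert (Hs : 0 < chamber_param q n < 1).
  { unfold chamber_param. revert H1 H2. unfold chamber_low, chamber_high, Rmin, Rmax.
    destruct (Rle_dec (corner_value q + beta) (corner_value q + alpha)); intros;
      [|replace (_ / _) with ((corner_value q + beta - chamber_value q n) / (beta - alpha))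
          by (field; lra)];
      apply Rdiv_in_01; lra. }
  exists (chamber_param q n). unfold chamber_rep.
  rewrite phi1_point_of, phi2_point_of, phi3_point_of.
  replace (alpha * (IZR (fst q) + chamber_param q n) +
           beta * (IZR (snd q) + 1 - chamber_param q n) + gamma) with (chamber_value q n)
    by (unfold chamber_param, corner_value; field; lra).
  repeat split; lra.
Qed.

Lemma chamber_rep_cell q n : In n (chamber_labels q) ->
  cell (chamber_rep q n) = q /\ Int_part (phi3 (chamber_rep q n)) = n.
Proof.
  intros Hn. destruct (chamber_rep_forms q n Hn) as [s [Hs [E1 [E2 E3]]]].
  unfold cell. rewrite E1, E2, (Int_part_eq _ (fst q)), (Int_part_eq _ (snd q)),
    (Int_part_eq _ n) by lra.
  destruct q. auto.
Qed.

Lemma chamber_rep_off_lines q n : In n (chamber_labels q) -> ~ on_union lines (chamber_rep q n).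
Proof.
  intros Hn. destruct (chamber_rep_forms q n Hn) as [s [Hs [E1 [E2 E3]]]].
  rewrite on_union_lines, E1, E2.
  intros [H|[H|H]]; revert H; [apply (not_is_int _ (fst q)) | apply (not_is_int _ (snd q))
    | apply (not_is_int _ n)]; lra.
Qed.

Lemma chamber_label_complete p : ~ on_union lines p ->
  In (Int_part (phi3 p)) (chamber_labels (cell p)).
Proof.
  rewrite on_union_lines. intros Hp.
  destruct (cell_decomposition p) as [s [t [Hs [Ht [_ [E1 [E2 E3]]]]]]].
  assert (Hs0 : s <> 0) by (rewrite <- E1; tauto).
  assert (Ht0 : t <> 0) by (rewrite <- E2; tauto).
  assert (Hrange : chamber_low (cell p) < phi3 p < chamber_high (cell p)).
  { rewrite E3. unfold chamber_low, chamber_high.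
    destruct (opposite_combination_between alpha beta s t alpha_beta_nonpos alpha_neq_beta)
      as [Hlo Hhi]; [lra | lra |].
    revert Hlo Hhi. unfold Rmin, Rmax.
    destruct (Rle_dec beta alpha), (Rle_dec (corner_value (cell p) + beta)
                                            (corner_value (cell p) + alpha)); lra. }
  apply In_chamber_labels. destruct (Int_part_bounds (phi3 p)).
  split; [apply IZR_le, Int_part_le|]; lra.
Qed.

Definition cell_chamber_count (z : R) : nat := (cell_vertex_count z + int_indicator z)%nat.

(* The slices are the integer points strictly inside the interval plus one; these
   split into the integer points on the two edges and possibly the corner value. *)
Lemma length_chamber_labels q :
  length (chamber_labels q) = cell_chamber_count (corner_value q).
Proof.
  unfold chamber_labels, cell_chamber_count, cell_vertex_count.
  rewrite length_Zrange_Int_part by apply chamber_low_lt_high.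
  unfold chamber_low, chamber_high.
  fold (nints_between (corner_value q + beta) (corner_value q + alpha)).
  rewrite nints_between_opposite.
  - lia.
  - apply alpha_beta_nonpos.
  - apply alpha_neq_beta.
  - apply corner_value_not_int.
Qed.

Lemma cell_equiv_torus_eq x y : torus_eq x y -> cell_equiv (cell x) (cell y).
Proof. rewrite torus_eq_translate. intros [m [n ->]]. apply cell_equiv_translate. Qed.

Lemma torus_eq_same_cell x y : torus_eq x y -> cell x = cell y -> x = y.
Proof. rewrite torus_eq_translate. intros [m [n ->]]. apply translate_same_cell. Qed.

Lemma same_chamber_lines x y : same_chamber lines x y ->
  exists m n, cell x = cell (translate y m n) /\
              Int_part (phi3 x) = Int_part (phi3 (translate y m n)).
Proof.
  rewrite same_chamber_iff. intros [_ [_ [m [n H]]]]. exists m, n.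
  unfold cell. rewrite !H by (simpl; auto). auto.
Qed.

Definition vertex_reps (Q : list (Z * Z)) : list (R * R) :=
  flat_map (fun q => map (vertex_rep q) (vertex_labels q)) Q.

Definition chamber_reps (Q : list (Z * Z)) : list (R * R) :=
  flat_map (fun q => map (chamber_rep q) (chamber_labels q)) Q.

Section Transversal.
Variable Q : list (Z * Z).
Hypothesis Q_inequiv : pairwise_inequiv cell_equiv Q.
Hypothesis Q_covers : forall q, exists q', In q' Q /\ cell_equiv q q'.

Lemma translate_into_transversal p : exists q m n, In q Q /\ cell (translate p m n) = q.
Proof.
  destruct (Q_covers (cell p)) as [q [Hq Hpq]].
  destruct (exists_translate_to_cell p q) as [m [n H]]; [symmetry; auto|].
  exists q, m, n. auto.
Qed.

Lemma num_vertices_transversal : num_vertices lines (length (vertex_reps Q)).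
Proof.
  apply num_classes_of_list.
  - intros x Hx. apply in_flat_map in Hx. destruct Hx as [q [_ Hx]].
    apply in_map_iff in Hx. destruct Hx as [v [<- Hv]]. apply vertex_rep_is_vertex. auto.
  - apply (pairwise_inequiv_flat_map cell_equiv); auto.
    + intros q _. apply (pairwise_inequiv_map eq);
        [|apply NoDup_pairwise_inequiv_eq, NoDup_vertex_labels].
      intros v v' Hv Hv' Ht. apply (vertex_rep_inj q); auto.
      apply torus_eq_same_cell; auto. rewrite !vertex_rep_cell; auto.
    + intros q q' x y _ _ Hx Hy Ht. apply in_map_iff in Hx, Hy.
      destruct Hx as [v [<- Hv]], Hy as [v' [<- Hv']].
      rewrite <- (vertex_rep_cell q v), <- (vertex_rep_cell q' v') by auto.
      apply cell_equiv_torus_eq. auto.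
  - intros p Hp. destruct (translate_into_transversal p) as [q [m [n [Hq Hc]]]].
    destruct (vertex_rep_complete (translate p m n)) as [v [Hv Hrep]];
      [apply is_vertex_translate; auto|].
    rewrite Hc in Hv, Hrep. exists (vertex_rep q v). split.
    + apply in_flat_map. exists q. split; auto. apply in_map. auto.
    + rewrite Hrep. apply torus_eq_sym, torus_eq_translate. exists m, n. auto.
Qed.

Lemma num_chambers_transversal : num_chambers lines (length (chamber_reps Q)).
Proof.
  apply num_classes_of_list.
  - intros x Hx. apply in_flat_map in Hx. destruct Hx as [q [_ Hx]].
    apply in_map_iff in Hx. destruct Hx as [n [<- Hn]]. apply chamber_rep_off_lines. auto.
  - apply (pairwise_inequiv_flat_map cell_equiv); auto.
    + intros q _. apply (pairwise_inequiv_map eq);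
        [|apply NoDup_pairwise_inequiv_eq, NoDup_Zrange].
      intros n n' Hn Hn' Hs. destruct (same_chamber_lines _ _ Hs) as [m [k [Hc H3]]].
      destruct (chamber_rep_cell q n Hn) as [C1 <-], (chamber_rep_cell q n' Hn') as [C1' <-].
      rewrite translate_same_cell in H3 by congruence. auto.
    + intros q q' x y _ _ Hx Hy Hs. apply in_map_iff in Hx, Hy.
      destruct Hx as [n [<- Hn]], Hy as [n' [<- Hn']].
      destruct (same_chamber_lines _ _ Hs) as [m [k [Hc _]]].
      rewrite (proj1 (chamber_rep_cell q n Hn)) in Hc. rewrite Hc.
      rewrite cell_equiv_translate, (proj1 (chamber_rep_cell q' n' Hn')). reflexivity.
  - intros p Hp. destruct (translate_into_transversal p) as [q [m [n [Hq Hc]]]].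
    assert (Hp' : ~ on_union lines (translate p m n)) by (rewrite on_union_translate; auto).
    pose proof (chamber_label_complete _ Hp') as Hk. rewrite Hc in Hk.
    destruct (chamber_rep_cell q _ Hk) as [C1 C3].
    exists (chamber_rep q (Int_part (phi3 (translate p m n)))). split.
    + apply in_flat_map. exists q. split; auto. apply in_map. auto.
    + apply same_chamber_sym, same_chamber_iff.
      split; [apply chamber_rep_off_lines; auto|]. split; auto. exists m, n.
      rewrite <- Hc in C1 at 2. unfold cell in C1. injection C1 as C1 C2.
      simpl. intros l [<-|[<-|[<-|[]]]]; auto.
Qed.

Lemma counts_transversal f0 f2 : num_vertices lines f0 -> num_chambers lines f2 ->
  f0 = list_sum (map (fun q => cell_vertex_count (corner_value q)) Q) /\
  f2 = list_sum (map (fun q => cell_chamber_count (corner_value q)) Q).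
Proof.
  intros Hv Hc. split.
  - transitivity (length (vertex_reps Q)).
    + apply (num_classes_unique (is_vertex lines) torus_eq); auto;
        [|apply num_vertices_transversal].
      intros x1 x2 y _ _ H1 H2. apply (torus_eq_trans _ y); auto. apply torus_eq_sym. auto.
    + unfold vertex_reps. rewrite length_flat_map. f_equal. apply map_ext. intros q.
      rewrite length_map, length_vertex_labels. auto.
  - transitivity (length (chamber_reps Q)).
    + apply (num_classes_unique (fun p => ~ on_union lines p) (same_chamber lines)); auto;
        [|apply num_chambers_transversal].
      intros x1 x2 y _ _ H1 H2. apply (same_chamber_trans _ _ y); auto.
      apply same_chamber_sym. auto.
    + unfold chamber_reps. rewrite length_flat_map. f_equal. apply map_ext. intros q.
      rewrite length_map, length_chamber_labels. auto.
Qed.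

End Transversal.

(* Two cells are [frac_equiv] when [phi3] has the same fractional part at their
   corners; the counts [cell_vertex_count] and [int_indicator] only depend on
   that class. *)
Definition frac_equiv (q q' : Z * Z) : Prop := is_int (corner_value q - corner_value q').

Global Instance frac_equiv_Equivalence : Equivalence frac_equiv.
Proof.
  unfold frac_equiv. split.
  - intros q. exists 0%Z. ring.
  - intros q q' [k Hk]. exists (- k)%Z. rewrite opp_IZR. lra.
  - intros q q' q'' [k Hk] [k' Hk']. exists (k + k')%Z. rewrite plus_IZR. lra.
Qed.

Lemma cell_equiv_frac_equiv q q' : cell_equiv q q' -> frac_equiv q q'.
Proof.
  intros [m [n [H1 H2]]]. exists (a3 * m + b3 * n)%Z.
  replace (corner_value q - corner_value q')
    with (alpha * IZR (fst q - fst q') + beta * IZR (snd q - snd q'))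
    by (unfold corner_value; rewrite !minus_IZR; ring).
  rewrite H1, H2, !plus_IZR, !mult_IZR. destruct line3_combination as [-> ->]. ring.
Qed.

Definition cell_add (q e : Z * Z) : Z * Z := (fst q + fst e, snd q + snd e)%Z.

Lemma corner_value_add q e :
  corner_value (cell_add q e) = corner_value q + (corner_value e - corner_value (0, 0)%Z).
Proof. unfold corner_value, cell_add. simpl. rewrite !plus_IZR. ring. Qed.

Lemma cell_equiv_add q e e' : cell_equiv (cell_add q e) (cell_add q e') <-> cell_equiv e e'.
Proof.
  unfold cell_equiv, cell_add. simpl.
  split; intros [m [n [H1 H2]]]; exists m, n; split; lia.
Qed.

Lemma frac_equiv_cell_add q e : frac_equiv (cell_add q e) q <-> frac_equiv e (0, 0)%Z.
Proof.
  unfold frac_equiv. rewrite corner_value_add.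
  replace (corner_value q + (corner_value e - corner_value (0, 0)%Z) - corner_value q)
    with (corner_value e - corner_value (0, 0)%Z) by ring.
  tauto.
Qed.

Lemma cell_vertex_count_add_IZR z k : cell_vertex_count (z + IZR k) = cell_vertex_count z.
Proof.
  unfold cell_vertex_count.
  replace (z + IZR k + alpha) with (z + alpha + IZR k) by ring.
  replace (z + IZR k + beta) with (z + beta + IZR k) by ring.
  rewrite !nints_between_add_IZR. auto.
Qed.

Lemma cell_counts_translate r e : frac_equiv e (0, 0)%Z ->
  cell_vertex_count (corner_value (cell_add r e)) = cell_vertex_count (corner_value r) /\
  int_indicator (corner_value (cell_add r e)) = int_indicator (corner_value r).
Proof.
  intros [k Hk]. rewrite corner_value_add, Hk.
  rewrite cell_vertex_count_add_IZR, int_indicator_add_IZR. auto.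
Qed.

(* Every cell is equivalent to one whose coordinates lie in [0, |det12|), since
   [det12 * Z^2] is contained in the lattice of [cell_equiv]. *)
Definition cell_box : list (Z * Z) :=
  list_prod (Zrange 0 (Z.abs det12 - 1)) (Zrange 0 (Z.abs det12 - 1)).

Lemma cell_box_covers q : exists b, In b cell_box /\ cell_equiv q b.
Proof.
  set (d := Z.abs det12). assert (Hd : (0 < d)%Z) by (unfold d; lia).
  exists (fst q mod d, snd q mod d)%Z. split.
  - unfold cell_box. fold d. apply in_prod; apply In_Zrange;
      pose proof (Z.mod_pos_bound (fst q) d Hd); pose proof (Z.mod_pos_bound (snd q) d Hd); lia.
  - assert (Hdiv : forall x, (det12 | x - x mod d)%Z).
    { intros x. apply Z.divide_abs_l. fold d. exists (x / d)%Z.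
      rewrite (Z.div_mod x d) at 1 by lia. ring. }
    destruct (Hdiv (fst q)) as [t1 E1], (Hdiv (snd q)) as [t2 E2].
    exists (b2 * t1 - b1 * t2)%Z, (a1 * t2 - a2 * t1)%Z. simpl.
    rewrite E1, E2. unfold det12. split; ring.
Qed.

(* A transversal of the cells modulo [cell_equiv] of the form
   [{r + e | r in rs, e in es}], where [rs] is a transversal modulo [frac_equiv]
   and [es] one of the cells [frac_equiv] to the origin. *)
Lemma exists_product_transversal : exists rs es,
  pairwise_inequiv frac_equiv rs /\ (forall e, In e es -> frac_equiv e (0, 0)%Z) /\
  pairwise_inequiv cell_equiv (flat_map (fun r => map (cell_add r) es) rs) /\
  (forall q, exists q', In q' (flat_map (fun r => map (cell_add r) es) rs) /\ cell_equiv q q').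
Proof.
  destruct (exists_transversal frac_equiv (fun _ => True) cell_box) as [rs [_ [Hrs Hrs_cov]]].
  destruct (exists_transversal cell_equiv (fun e => frac_equiv e (0, 0)%Z) cell_box)
    as [es [Hes0 [Hes Hes_cov]]].
  assert (Hes_frac : forall e, In e es -> frac_equiv e (0, 0)%Z)
    by (intros e He; apply (proj2 (Hes0 e He))).
  exists rs, es. split; [auto|split; [auto|split]].
  - apply (pairwise_inequiv_flat_map frac_equiv); auto.
    + intros r _. apply (pairwise_inequiv_map cell_equiv); auto.
      intros e e' _ _. apply cell_equiv_add.
    + intros r r' x y _ _ Hx Hy Hxy. apply in_map_iff in Hx, Hy.
      destruct Hx as [e [<- He]], Hy as [e' [<- He']].
      apply cell_equiv_frac_equiv in Hxy.
      rewrite <- (proj2 (frac_equiv_cell_add r e) (Hes_frac e He)),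
              <- (proj2 (frac_equiv_cell_add r' e') (Hes_frac e' He')).
      auto.
  - intros q. destruct (cell_box_covers q) as [b [Hb Hqb]].
    destruct (Hrs_cov b Hb I) as [r [Hr Hbr]].
    set (w := (fst b - fst r, snd b - snd r)%Z).
    assert (Hb_eq : b = cell_add r w) by (unfold cell_add, w; destruct b; simpl; f_equal; ring).
    destruct (cell_box_covers w) as [b' [Hb' Hwb']].
    assert (Hw : frac_equiv b' (0, 0)%Z).
    { rewrite <- (cell_equiv_frac_equiv _ _ Hwb'), <- (frac_equiv_cell_add r w), <- Hb_eq.
      auto. }
    destruct (Hes_cov b' Hb' Hw) as [e [He Hb'e]].
    exists (cell_add r e). split.
    + apply in_flat_map. exists r. split; auto. apply in_map. auto.
    + rewrite Hqb, Hb_eq, cell_equiv_add, Hwb'. auto.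
Qed.

(* With the product transversal, both counts are [length es] times a sum over [rs],
   and the two sums differ by the number of [r] in [rs] with an integral corner
   value, which is at most one. *)
Theorem normal_form_divisibility f0 f2 :
  num_vertices lines f0 -> num_chambers lines f2 -> (f0 < f2)%nat -> Nat.divide (f2 - f0) f0.
Proof.
  intros Hv Hc Hlt.
  destruct exists_product_transversal as [rs [es [Hrs [Hes [HQ HQ_cov]]]]].
  destruct (counts_transversal _ HQ HQ_cov f0 f2 Hv Hc) as [Ef0 Ef2].
  assert (Hinv := fun r e He => cell_counts_translate r e (Hes e He)).
  rewrite (list_sum_flat_map_translates (fun q => cell_vertex_count (corner_value q))) in Ef0
    by (intros r e He; apply (Hinv r e He)).
  rewrite (list_sum_flat_map_translates (fun q => cell_chamber_count (corner_value q))) in Ef2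
    by (intros r e He; unfold cell_chamber_count; destruct (Hinv r e He) as [-> ->]; auto).
  unfold cell_chamber_count in Ef2. rewrite list_sum_map_add in Ef2.
  assert (Hind : (list_sum (map (fun r => int_indicator (corner_value r)) rs) <= 1)%nat).
  { apply (list_sum_indicator_le_1 frac_equiv); auto; [intros; apply int_indicator_le_1|].
    intros r r' H H'. apply int_indicator_1 in H, H'. destruct H as [k Hk], H' as [k' Hk'].
    exists (k - k')%Z. rewrite minus_IZR. lra. }
  set (X := list_sum (map (fun r => cell_vertex_count (corner_value r)) rs)) in *.
  set (S := list_sum (map (fun r => int_indicator (corner_value r)) rs)) in *.
  assert (HS : S = 1%nat) by (destruct S as [|[|]]; lia).
  exists X. rewrite Ef2, Ef0, HS. lia.
Qed.

End ThreeLines.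

(** * Reduction to three lines in normal form *)

Lemma same_tline_sym l l' : same_tline l l' -> same_tline l' l.
Proof. intros H p. rewrite (H p). tauto. Qed.

Lemma same_tline_trans l l' l'' : same_tline l l' -> same_tline l' l'' -> same_tline l l''.
Proof. intros H H' p. rewrite (H p), (H' p). tauto. Qed.

Lemma primitive_det0_parallel l l' : valid_line l -> valid_line l' ->
  (ta l * tb l' = ta l' * tb l)%Z -> parallel l l'.
Proof.
  unfold valid_line, parallel. destruct l as [a b c], l' as [a' b' c']. simpl.
  intros G G' E.
  assert (D1 : (a | a')%Z) by (apply (Z.gauss a b a'); auto; exists b'; lia).
  assert (D2 : (a' | a)%Z) by (apply (Z.gauss a' b' a); auto; exists b; lia).
  assert (D3 : (b | b')%Z)
    by (apply (Z.gauss b a b'); [exists a'; lia | rewrite Z.gcd_comm; auto]).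
  assert (D4 : (b' | b)%Z)
    by (apply (Z.gauss b' a' b); [exists a; lia | rewrite Z.gcd_comm; auto]).
  pose proof (Z.divide_antisym_abs _ _ D1 D2). pose proof (Z.divide_antisym_abs _ _ D3 D4).
  destruct (Z.eq_dec a 0) as [->|Ha].
  - lia.
  - assert (a = a' \/ a = - a')%Z as [<-| ->] by lia.
    + left. split; auto. apply (Z.mul_reg_l _ _ a); lia.
    + right. split; auto. apply (Z.mul_reg_l _ _ a'); lia.
Qed.

Lemma parallel_meet_same_tline l l' p : parallel l l' -> on_line l p -> on_line l' p ->
  same_tline l l'.
Proof.
  intros Hpar [k Hk] [k' Hk'] q. unfold on_line, parallel in *.
  destruct l as [a b c], l' as [a' b' c']. simpl in *.
  destruct Hpar as [[-> ->]|[-> ->]]; split; intros [j Hj].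
  - exists (j - k + k')%Z. rewrite !plus_IZR, minus_IZR. lra.
  - exists (j - k' + k)%Z. rewrite !plus_IZR, minus_IZR. lra.
  - exists (k + k' - j)%Z. rewrite !minus_IZR, !plus_IZR, !opp_IZR in *. lra.
  - exists (k + k' - j)%Z. rewrite !minus_IZR, !plus_IZR, !opp_IZR in *. lra.
Qed.

Definition same_lines (A A' : list tline) : Prop :=
  forall l, In l A -> exists l', In l' A' /\ same_tline l l'.

Section SameLines.
Variables A A' : list tline.
Hypothesis AA' : same_lines A A'.
Hypothesis A'A : same_lines A' A.

Lemma on_union_same_lines p : on_union A p <-> on_union A' p.
Proof.
  assert (H : forall B B', same_lines B B' -> on_union B p -> on_union B' p).
  { intros B B' HB [l [Hl Hp]]. destruct (HB l Hl) as [l' [Hl' Hs]].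
    exists l'. split; auto. apply Hs. auto. }
  split; apply H; auto.
Qed.

Lemma num_vertices_same_lines f : num_vertices A f -> num_vertices A' f.
Proof.
  assert (H : forall B B' p, same_lines B B' -> is_vertex B p -> is_vertex B' p).
  { intros B B' p HB [l1 [l2 [H1 [H2 [Hn [O1 O2]]]]]].
    destruct (HB l1 H1) as [l1' [H1' S1]], (HB l2 H2) as [l2' [H2' S2]].
    exists l1', l2'. split; [auto|split; [auto|split; [|split]]].
    - intros S. apply Hn, (same_tline_trans _ l1'); auto.
      apply (same_tline_trans _ l2'); auto. apply same_tline_sym. auto.
    - apply S1. auto.
    - apply S2. auto. }
  apply num_classes_ext; [split; apply H; auto | tauto].
Qed.

Lemma num_chambers_same_lines f : num_chambers A f -> num_chambers A' f.
Proof.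
  apply num_classes_ext.
  - intros p. rewrite on_union_same_lines. tauto.
  - intros p q. unfold same_chamber. setoid_rewrite on_union_same_lines. tauto.
Qed.

End SameLines.

Definition tline_opp (l : tline) : tline := mkTline (- ta l) (- tb l) (- tc l).

Lemma same_tline_opp l : same_tline l (tline_opp l).
Proof.
  intros p. unfold on_line, tline_opp. simpl.
  split; intros [k Hk]; exists (- k)%Z; rewrite !opp_IZR in *; lra.
Qed.

Lemma three_tlines_divisibility_nonpos (P Q R : tline) f0 f2 :
  valid_line P -> valid_line Q -> valid_line R ->
  ~ same_tline P Q -> ~ same_tline P R -> ~ same_tline Q R -> ~ parallel P Q ->
  ((ta R * tb Q - ta Q * tb R) * (ta P * tb R - ta R * tb P) <= 0)%Z ->
  num_vertices (P :: Q :: R :: nil) f0 -> num_chambers (P :: Q :: R :: nil) f2 ->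
  (f0 < f2)%nat -> Nat.divide (f2 - f0) f0.
Proof.
  intros VP VQ VR SPQ SPR SQR NPQ Hsign.
  destruct P as [a1 b1 c1], Q as [a2 b2 c2], R as [a3 b3 c3].
  apply normal_form_divisibility; auto; unfold det12, det32, det13; simpl in *.
  - intros E. apply NPQ, primitive_det0_parallel; simpl; auto. lia.
  - intros [-> ->]. unfold valid_line in VR. simpl in VR. discriminate.
  - intros E p H1 H3. apply SPR, (parallel_meet_same_tline _ _ p); auto.
    apply primitive_det0_parallel; simpl; auto. lia.
  - intros E p H2 H3. apply SQR, (parallel_meet_same_tline _ _ p); auto.
    apply primitive_det0_parallel; simpl; auto. lia.
Qed.

(* Replacing the equation of [Q] by its opposite flips the sign of the product. *)
Lemma three_tlines_divisibility (P Q R : tline) f0 f2 :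
  valid_line P -> valid_line Q -> valid_line R ->
  ~ same_tline P Q -> ~ same_tline P R -> ~ same_tline Q R -> ~ parallel P Q ->
  num_vertices (P :: Q :: R :: nil) f0 -> num_chambers (P :: Q :: R :: nil) f2 ->
  (f0 < f2)%nat -> Nat.divide (f2 - f0) f0.
Proof.
  intros VP VQ VR SPQ SPR SQR NPQ Hv Hc.
  destruct (Z_le_gt_dec ((ta R * tb Q - ta Q * tb R) * (ta P * tb R - ta R * tb P)) 0)
    as [Hsign|Hsign]; [apply (three_tlines_divisibility_nonpos P Q R); auto|].
  set (Q' := tline_opp Q). pose proof (same_tline_opp Q) as SQ.
  assert (Hsame : same_lines (P :: Q :: R :: nil) (P :: Q' :: R :: nil) /\
                  same_lines (P :: Q' :: R :: nil) (P :: Q :: R :: nil)).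
  { split; intros l [<-|[<-|[<-|[]]]];
      [exists P | exists Q' | exists R | exists P | exists Q | exists R];
      simpl; split; auto; try (intros p; tauto). apply same_tline_sym. auto. }
  destruct Hsame as [H1 H2].
  apply (three_tlines_divisibility_nonpos P Q' R).
  - auto.
  - unfold valid_line, Q', tline_opp in *. simpl. rewrite Z.gcd_opp_l, Z.gcd_opp_r. auto.
  - auto.
  - intros H. apply SPQ, (same_tline_trans _ Q'); auto. apply same_tline_sym. auto.
  - auto.
  - intros H. apply SQR, (same_tline_trans _ Q'); auto.
  - intros H. apply NPQ. unfold parallel, Q', tline_opp in *. simpl in H. lia.
  - unfold Q', tline_opp. simpl. nia.
  - apply (num_vertices_same_lines _ _ H1 H2). auto.
  - apply (num_chambers_same_lines _ _ H1 H2). auto.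
Qed.

Lemma same_lines_incl A A' : (forall l, In l A -> In l A') -> same_lines A A'.
Proof. intros H l Hl. exists l. split; auto. intros p. tauto. Qed.

Lemma toric_arrangement_three A : toric_arrangement A -> length A = 3%nat ->
  exists P Q R, valid_line P /\ valid_line Q /\ valid_line R /\
    ~ same_tline P Q /\ ~ same_tline P R /\ ~ same_tline Q R /\ ~ parallel P Q /\
    (forall l, In l A <-> In l (P :: Q :: R :: nil)).
Proof.
  intros [Hval [Hdist [l1 [l2 [H1 [H2 NP]]]]]] Hlen.
  destruct A as [|x [|y [|z [|w A]]]]; simpl in Hlen; try discriminate.
  rewrite Forall_forall in Hval.
  assert (Sxy : ~ same_tline x y) by (apply (Hdist 0 1)%nat; simpl; lia).
  assert (Sxz : ~ same_tline x z) by (apply (Hdist 0 2)%nat; simpl; lia).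
  assert (Syz : ~ same_tline y z) by (apply (Hdist 1 2)%nat; simpl; lia).
  assert (Hsym : forall l l', ~ same_tline l l' -> ~ same_tline l' l)
    by (intros l l' H S; apply H, same_tline_sym, S).
  assert (Hpar : forall l, parallel l l) by (intros l; left; auto).
  simpl in H1, H2.
  destruct H1 as [<-|[<-|[<-|[]]]], H2 as [<-|[<-|[<-|[]]]];
    try (exfalso; apply NP, Hpar);
    [exists x, y, z | exists x, z, y | exists y, x, z |
     exists y, z, x | exists z, x, y | exists z, y, x];
    repeat split; auto; try (apply Hval; simpl; tauto); simpl; tauto.
Qed.

Theorem mainTheorem9 (A : list tline) (f0 f2 : nat) :
  toric_arrangement A -> length A = 3%nat ->
  num_vertices A f0 -> num_chambers A f2 ->
  (f0 < f2)%nat -> (f2 < 2 * f0)%nat ->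
  Nat.divide (f2 - f0) f0.
Proof.
  intros HA Hlen Hv Hc Hlt _.
  destruct (toric_arrangement_three A HA Hlen)
    as [P [Q [R [VP [VQ [VR [SPQ [SPR [SQR [NPQ HPQR]]]]]]]]]].
  assert (H1 : same_lines A (P :: Q :: R :: nil)) by (apply same_lines_incl, HPQR).
  assert (H2 : same_lines (P :: Q :: R :: nil) A) by (apply same_lines_incl, HPQR).
  apply (three_tlines_divisibility P Q R); auto.
  - apply (num_vertices_same_lines A); auto.
  - apply (num_chambers_same_lines A); auto.
Qed.
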